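(* Let $\mathbb{A}$ be a Boolean algebra and $(\mathbb{B},\mu)$ a metric Boolean algebra. Then on $\mathcal{H}(\mathbb{A},\mathbb{B})$ we have $d_{hom}=d_{hom}^{Bor}$, where for $\varphi,\psi\in\mathcal{H}(\mathbb{A},\mathbb{B})$ $d_{hom}(\varphi,\psi)=\sup\{\mu(\varphi(A)\triangle\psi(A))\colon A\in\mathbb{A}\}$ and $d_{hom}^{Bor}(\varphi,\psi)=\sup\{\widehat{\mu}(f_\varphi^{-1}[B]\triangle f_\psi^{-1}[B])\colon B\text{ a Borel subset of }St(\mathbb{A})\}$.
   Context: A metric Boolean algebra $(\mathbb{B},\mu)$ is a Boolean algebra with a strictly positive finitely additive probability measure $\mu$. $\mathcal{H}(\mathbb{A},\mathbb{B})$ is the set of homomorphisms $\mathbb{A}\to\mathbb{B}$. Algebras are identified with the clopen algebras of their Stone spaces $St(\cdot)$; $\widehat{\mu}$ is the unique Radon measure on $St(\mathbb{B})$ extending $\mu$; $f_\varphi\colon St(\mathbb{B})\to St(\mathbb{A})$ is the continuous map $f_\varphi(x)=\varphi^{-1}[x]$. *)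

From HB Require Import structures.
From mathcomp Require Import all_boot all_order all_algebra.
From mathcomp Require Import all_classical all_reals all_analysis.

Set Implicit Arguments.
Unset Strict Implicit.
Unset Printing Implicit Defensive.

Import Order.TTheory GRing.Theory Num.Theory.
Local Open Scope classical_set_scope.
Local Open Scope ring_scope.

(* Boolean algebras are modelled by mathcomp's complemented distributive
   lattices with top and bottom: ctbDistrLatticeType d. *)

Section BA.
Context {d : Order.disp_t} (A : ctbDistrLatticeType d).

Definition bsymdiff (a b : A) : A :=
  Order.join (Order.meet a (Order.compl b)) (Order.meet b (Order.compl a)).

Definition ultrafilter_of (x : set A) : Prop :=
  [/\ x Order.top, ~ x Order.bottom,
      (forall a b, x a -> x b -> x (Order.meet a b)),
      (forall a b, x a -> (a <= b)%O -> x b) &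
      (forall a, x a \/ x (Order.compl a))].

Definition St : Type := {x : set A | `[< ultrafilter_of x >]}.

HB.instance Definition _ := gen_eqMixin St.
HB.instance Definition _ := gen_choiceMixin St.

Definition clopen_of (a : A) : set St := [set x : St | proj1_sig x a].

Definition St_subbase (i : option A) : set St :=
  if i is Some a then clopen_of a else setT.

HB.instance Definition _ :=
  @isSubBaseTopological.Build St (option A) setT St_subbase.

Definition St_borel : set (set St) := <<s [set U : set St | open U] >>.

End BA.

Section Hom.
Context {dA dB : Order.disp_t} (A : ctbDistrLatticeType dA)
  (B : ctbDistrLatticeType dB).

Definition is_bhom (f : A -> B) : Prop :=
  [/\ forall a b, f (Order.meet a b) = Order.meet (f a) (f b),
      forall a b, f (Order.join a b) = Order.join (f a) (f b),
      forall a, f (Order.compl a) = Order.compl (f a),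
      f Order.bottom = Order.bottom &
      f Order.top = Order.top].

(* f_phi^{-1}[C] for C a subset of St(A), where f_phi(x) = phi^{-1}[x] *)
Definition stone_preimage (phi : A -> B) (C : set (St A)) : set (St B) :=
  [set x : St B | exists y : St A,
     proj1_sig y = phi @^-1` (proj1_sig x) /\ C y].
End Hom.

Section Metric.
Context {R : realType} {d : Order.disp_t} (B : ctbDistrLatticeType d).

(* (B, mu) is a metric Boolean algebra: mu is a strictly positive finitely
   additive probability measure on B *)
Definition metric_measure (mu : B -> R) : Prop :=
  [/\ mu Order.top = 1,
      (forall b, b != Order.bottom -> 0 < mu b) &
      (forall a b, Order.meet a b = Order.bottom ->
         mu (Order.join a b) = mu a + mu b)].

Definition borel_measure (nu : set (St B) -> \bar R) : Prop :=
  [/\ nu set0 = 0%E,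
      (forall E, St_borel E -> (0 <= nu E)%E) &
      (forall F : nat -> set (St B), (forall n, St_borel (F n)) ->
         trivIset setT F ->
         ((fun n => \sum_(0 <= i < n) nu (F i))%E @ \oo
            --> nu (\bigcup_n F n)))].

(* Radon: inner regular with respect to compact sets (finiteness follows
   from nu St(B) = mu(top) = 1) *)
Definition radon (nu : set (St B) -> \bar R) : Prop :=
  borel_measure nu /\
  forall E, St_borel E ->
    nu E = ereal_sup [set nu K | K in [set K | compact K /\ K `<=` E]].

(* nu is a Radon measure on St(B) extending mu, i.e. nu = \hat mu *)
Definition radon_extension (mu : B -> R) (nu : set (St B) -> \bar R) : Prop :=
  radon nu /\ forall b, nu (clopen_of b) = (mu b)%:E.
End Metric.

Section Dist.
Context {R : realType} {dA dB : Order.disp_t} (A : ctbDistrLatticeType dA)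
  (B : ctbDistrLatticeType dB).

Definition d_hom (mu : B -> R) (phi psi : A -> B) : \bar R :=
  ereal_sup [set (mu (bsymdiff (phi a) (psi a)))%:E | a in [set: A]].

Definition d_hom_Bor (nu : set (St B) -> \bar R) (phi psi : A -> B) : \bar R :=
  ereal_sup [set nu ((stone_preimage phi C `\` stone_preimage psi C)
                     `|` (stone_preimage psi C `\` stone_preimage phi C))
            | C in @St_borel _ A].
End Dist.

From HB Require Import structures.
From mathcomp Require Import all_boot all_order all_algebra.
From mathcomp Require Import all_classical all_reals all_analysis.
From mathcomp Require Import finmap.

(* The inequality d_hom <= d_hom^Bor comes from the clopen sets [a], whose
   preimages under f_phi and f_psi are [phi a] and [psi a].  Conversely, let
   lam be the sum of the images of \hat mu under f_phi and f_psi.  Inner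
   regularity of \hat mu by compact sets, together with compactness of the
   images of compact sets, lets every open set of St(A) be lam-approximated
   from inside by a clopen set.  Sets that lam-approximate by clopens form a
   sigma-algebra, so every Borel C is within lam-distance e of some [a], and
   the triangle inequality for symmetric differences gives
   \hat mu(f_phi^-1 C + f_psi^-1 C) <= lam(C + [a]) + mu(phi a + psi a)
   <= e + d_hom. *)

Set Implicit Arguments.
Unset Strict Implicit.
Unset Printing Implicit Defensive.

Import Order.Theory GRing.Theory Num.Theory.
Local Open Scope classical_set_scope.
Local Open Scope ring_scope.

Section StoneSpace.
Context {d : Order.disp_t} {A : ctbDistrLatticeType d}.
Implicit Types (x : set A) (a b : A).

Lemma ultrafilter_meet x a b : ultrafilter_of x ->
  x (Order.meet a b) <-> x a /\ x b.
Proof.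
case=> _ _ xI xU _; split=> [xab|[]]; last exact: xI.
by split; apply: xU xab _; [exact: leIl|exact: leIr].
Qed.

Lemma ultrafilter_compl x a : ultrafilter_of x -> x (Order.compl a) <-> ~ x a.
Proof.
case=> _ xbot xI _ xC; split; last by case: (xC a).
by move=> xCa xa; apply: xbot; rewrite -(meetxC a); exact: xI.
Qed.

Lemma ultrafilter_join x a b : ultrafilter_of x ->
  x (Order.join a b) <-> x a \/ x b.
Proof.
move=> xuf; split; last first.
  case: xuf => _ _ _ xU _ [xa|xb]; [exact: xU xa (leUl _ _)|exact: xU xb (leUr _ _)].
rewrite -[Order.join a b]complK complU (ultrafilter_compl _ xuf).
rewrite (ultrafilter_meet _ _ xuf) !(ultrafilter_compl _ xuf).
by move=> /not_andP[] /contrapT; [left|right].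
Qed.

Lemma St_ultrafilter (p : St A) : ultrafilter_of (sval p).
Proof. exact/asboolP/(svalP p). Qed.

Lemma clopen_meet a b :
  clopen_of (Order.meet a b) = clopen_of a `&` clopen_of b.
Proof.
apply/seteqP; split=> p.
all: by rewrite /clopen_of /= (ultrafilter_meet _ _ (St_ultrafilter p)).
Qed.

Lemma clopen_join a b :
  clopen_of (Order.join a b) = clopen_of a `|` clopen_of b.
Proof.
apply/seteqP; split=> p.
all: by rewrite /clopen_of /= (ultrafilter_join _ _ (St_ultrafilter p)).
Qed.

Lemma clopen_compl a : clopen_of (Order.compl a) = ~` clopen_of a.
Proof.
apply/seteqP; split=> p.
all: by rewrite /clopen_of /= (ultrafilter_compl _ (St_ultrafilter p)).
Qed.

Lemma clopen_top : clopen_of (Order.top : A) = setT.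
Proof. by apply/seteqP; split=> // p _; case: (St_ultrafilter p). Qed.

Lemma clopen_bottom : clopen_of (Order.bottom : A) = set0.
Proof. by apply/seteqP; split=> // p; case: (St_ultrafilter p). Qed.

Lemma clopen_bsymdiff a b :
  clopen_of (bsymdiff a b) = clopen_of a `+` clopen_of b.
Proof. by rewrite /bsymdiff clopen_join !clopen_meet !clopen_compl. Qed.

Lemma clopen_big_join (s : seq A) :
  clopen_of (\join_(a <- s) a)%O = \bigcup_(a in [set` s]) clopen_of a.
Proof.
rewrite bigcup_seq; elim: s => [|a s IHs]; first by rewrite !big_nil clopen_bottom.
by rewrite !big_cons clopen_join IHs.
Qed.

Lemma St_subbaseE (i : option A) : St_subbase i = clopen_of (odflt Order.top i).
Proof. by case: i => [a|] //=; rewrite clopen_top. Qed.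

Lemma bigcap_St_subbase (s : seq (option A)) :
  \bigcap_(i in [set` s]) St_subbase i = clopen_of (\meet_(i <- s) odflt Order.top i)%O.
Proof.
rewrite bigcap_seq; elim: s => [|i s IHs]; first by rewrite !big_nil clopen_top.
by rewrite !big_cons clopen_meet IHs St_subbaseE.
Qed.

Lemma St_openP (U : set (St A)) :
  open U <-> forall p, U p -> exists2 a, clopen_of a p & clopen_of a `<=` U.
Proof.
split=> [[D sD <-] p [V DV Vp]|Uopen].
  have [F _ FV] := sD V DV.
  exists (\meet_(i <- enum_fset F) odflt Order.top i)%O.
    by rewrite -bigcap_St_subbase FV.
  by rewrite -bigcap_St_subbase FV => q Vq; exists V.
exists [set V | exists2 a, V = clopen_of a & clopen_of a `<=` U].
  move=> V [a -> _]; exists [fset Some a]%fset => //.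
    by move=> ? _; exact/mem_set.
  by rewrite set_fset1 bigcap_set1.
apply/seteqP; split=> [p [V [a -> aU] Vp]|p /Uopen[a ap aU]]; first exact: aU.
by exists (clopen_of a) => //; exists a.
Qed.

Lemma open_clopen a : open (clopen_of a).
Proof. by apply/St_openP => p ap; exists a. Qed.

Lemma St_hausdorff : hausdorff_space (St A).
Proof.
rewrite open_hausdorff => p q pq.
have [a pa qNa] : exists2 a, sval p a & ~ sval q a.
  apply: contrapT => /forall2NP sep.
  have pq_sub b : sval p b -> sval q b by case: (sep b) => // /contrapT.
  apply/(negP pq)/eqP/val_inj/seteqP; split=> // b qb.
  apply: contrapT => /(ultrafilter_compl _ (St_ultrafilter p))/pq_sub.
  by move/(ultrafilter_compl _ (St_ultrafilter q))/(_ qb).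
exists (clopen_of a, clopen_of (Order.compl a)).
  by split; apply/mem_set => //; exact/(ultrafilter_compl _ (St_ultrafilter q)).
by split; [exact: open_clopen|exact: open_clopen|rewrite clopen_compl setICr].
Qed.

End StoneSpace.

(* Compactness by open covers and measurable types require a pointed carrier;
   pointedSt x0 is St A pointed at x0. *)
Definition pointedSt {d : Order.disp_t} {A : ctbDistrLatticeType d}
  (x0 : St A) : Type := St A.

Section PointedStoneSpace.
Context {d : Order.disp_t} {A : ctbDistrLatticeType d} (x0 : St A).

HB.instance Definition _ := Choice.on (pointedSt x0).
HB.instance Definition _ := isPointed.Build (pointedSt x0) x0.
HB.instance Definition _ := Topological.on (pointedSt x0).
HB.instance Definition _ := @isMeasurable.Build default_measure_display (pointedSt x0)
  (@St_borel _ A) (@sigma_algebra0 _ setT _) (@sigma_algebraC _ _)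
  (@sigma_algebra_bigcup _ setT _).

Lemma compact_sub_clopen (K U : set (pointedSt x0)) : compact K -> open U -> K `<=` U ->
  exists2 a, K `<=` clopen_of a & clopen_of a `<=` U.
Proof.
rewrite compact_cover => Kc /St_openP Uopen KU.
have [D DU KD] : finite_subset_cover [set a | clopen_of a `<=` U] (@clopen_of _ A) K.
  apply: Kc => [a _|p /KU /Uopen[a ap aU]]; first exact: open_clopen.
  by exists a.
exists (\join_(a <- enum_fset D) a)%O; rewrite clopen_big_join.
  by move=> p /KD[a Da ap]; exists a.
by move=> p [a Da ap]; exact: (set_mem (DU a Da)).
Qed.

Lemma St_open_measurable (U : set (pointedSt x0)) : open U -> measurable U.
Proof. exact: sub_sigma_algebra. Qed.

Lemma St_compact_measurable (K : set (pointedSt x0)) : compact K -> measurable K.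
Proof.
move=> /(compact_closed St_hausdorff)/closed_openC/St_open_measurable.
by rewrite -[X in measurable X -> _]/(~` K) => /measurableC; rewrite setCK.
Qed.

End PointedStoneSpace.

Section StoneMap.
Context {dA dB : Order.disp_t} {A : ctbDistrLatticeType dA}
  {B : ctbDistrLatticeType dB} (phi : A -> B) (hphi : is_bhom phi).

Lemma bhom_homo : {homo phi : a b / (a <= b)%O}.
Proof.
case: hphi => phiI _ _ _ _ a b /meet_idPl ab.
by apply/meet_idPl; rewrite -phiI ab.
Qed.

Lemma ultrafilter_preimage (x : set B) :
  ultrafilter_of x -> ultrafilter_of (phi @^-1` x).
Proof.
move=> xuf; have [xT xbot xI xU xC] := xuf; case: hphi => phiI _ phiC phi0 phiT.
split=> [|||a b /= xa /bhom_homo/(xU _ _ xa)//|a] /=.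
- by rewrite phiT.
- by rewrite phi0.
- by move=> a b xa xb; rewrite phiI; exact: xI.
- by rewrite phiC; exact: xC.
Qed.

Definition stone_map (q : St B) : St A :=
  exist _ (phi @^-1` sval q) (asboolT (ultrafilter_preimage (St_ultrafilter q))).

Lemma stone_preimageE (C : set (St A)) : stone_preimage phi C = stone_map @^-1` C.
Proof.
apply/seteqP; split=> q /=; last by exists (stone_map q).
by case=> p [pq Cp]; rewrite (_ : stone_map q = p) //; apply: val_inj.
Qed.

Lemma continuous_stone_map : continuous stone_map.
Proof.
apply/continuousP => U /St_openP Uopen; apply/St_openP => q /Uopen[a qa aU].
by exists (phi a) => // q' q'a; exact: aU.
Qed.

Lemma measurable_stone_map (y0 : St B) (x0 : St A) :
  measurable_fun setT (stone_map : pointedSt y0 -> pointedSt x0).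
Proof.
have : @measurable _ (pointedSt x0) = <<s [set U : set (St A) | open U] >> by [].
move/measurability; apply => _ [U Uopen <-].
rewrite setTI; apply: St_open_measurable.
by move/continuousP: continuous_stone_map; apply.
Qed.

End StoneMap.

Section SymmetricDifference.
Context {T : Type}.
Implicit Types X Y Z : set T.

Lemma setYCC X Y : ~` X `+` ~` Y = X `+` Y.
Proof. by rewrite /setY !setDE !setCK setUC setIC [Y `&` _]setIC. Qed.

Lemma subsetY_triangle X Y Z : X `+` Z `<=` (X `+` Y) `|` (Y `+` Z).
Proof. by move=> t /=; case: (pselect (Y t)); tauto. Qed.

Lemma subsetYU X1 X2 Y1 Y2 :
  (X1 `|` X2) `+` (Y1 `|` Y2) `<=` (X1 `+` Y1) `|` (X2 `+` Y2).
Proof. by move=> t /=; tauto. Qed.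

End SymmetricDifference.

Section MeasureFacts.
Local Open Scope ereal_scope.
Context {d} {T : measurableType d} {R : realType} (mu : {measure set T -> \bar R}).
Implicit Types X Y Z : set T.

Lemma measurableY X Y : measurable X -> measurable Y -> measurable (X `+` Y).
Proof. by move=> mX mY; apply: measurableU; exact: measurableD. Qed.

Lemma measureY_triangle X Y Z : measurable X -> measurable Y -> measurable Z ->
  mu (X `+` Z) <= mu (X `+` Y) + mu (Y `+` Z).
Proof.
move=> mX mY mZ; have mXY := measurableY mX mY; have mYZ := measurableY mY mZ.
apply: le_trans (measureU2 _ mXY mYZ); apply: le_measure; last exact: subsetY_triangle.
- exact/mem_set/measurableY.
- exact/mem_set/measurableU.
Qed.

Lemma measure_bigcup_tail_cvg0 (F : nat -> set T) : mu setT < +oo ->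
    (forall i, measurable (F i)) ->
  mu (\bigcup_i F i `\` \big[setU/set0]_(i < n) F i) @[n --> \oo] --> 0.
Proof.
move=> mu_fin mF; pose G n := \big[setU/set0]_(i < n) F i.
have mG n : measurable (\bigcup_i F i `\` G n).
  by apply: measurableD; [exact: bigcupT_measurable|exact: bigsetU_measurable].
have -> : 0 = mu (\bigcap_n (\bigcup_i F i `\` G n)).
  rewrite (_ : \bigcap_n _ = set0) ?measure0 //; apply/seteqP; split=> // t Ht.
  have [[k _ Fkt] _] := Ht 0%N I; have [_] := Ht k.+1 I; apply.
  exact: (@bigsetU_sup _ k k.+1 F (ltnSn k) t Fkt).
apply: nonincreasing_cvg_mu => //.
- apply: le_lt_trans mu_fin; apply: le_measure; last exact: subsetT.
  + exact/mem_set/mG.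
  + exact/mem_set/measurableT.
- exact: bigcapT_measurable.
- by move=> m n mn; rewrite subsetEset; apply: setDS; exact: subset_bigsetU.
Qed.

End MeasureFacts.

Section ClopenApproximation.
Local Open Scope ereal_scope.
Context {R : realType} {d : Order.disp_t} {A : ctbDistrLatticeType d} (x0 : St A).

Definition clopen_inner_regular (lam : set (pointedSt x0) -> \bar R) :=
  forall U : set (St A), open U -> forall e : R, (0 < e)%R ->
    exists2 a, clopen_of a `<=` U & lam (U `\` clopen_of a) <= e%:E.

Definition clopen_approximable (lam : set (pointedSt x0) -> \bar R) (C : set (St A)) :=
  forall e : R, (0 < e)%R -> exists a, lam (C `+` clopen_of a) <= e%:E.

Lemma measure_add_inner_regular (lam1 lam2 : {measure set (pointedSt x0) -> \bar R}) :
  clopen_inner_regular lam1 -> clopen_inner_regular lam2 ->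
  clopen_inner_regular (measure_add lam1 lam2).
Proof.
move=> reg1 reg2 U Uopen e e0; have e20 : (0 < e / 2)%R by rewrite divr_gt0.
have [a aU lam1a] := reg1 U Uopen _ e20; have [b bU lam2b] := reg2 U Uopen _ e20.
exists (Order.join a b); first by rewrite clopen_join => t [/aU|/bU].
have mUD c : measurable (U `\` clopen_of c : set (pointedSt x0)).
  by apply: measurableD; apply: St_open_measurable => //; exact: open_clopen.
rewrite measure_addE [e]splitr EFinD; apply: leeD.
- apply: le_trans lam1a; apply: le_measure; [exact/mem_set|exact/mem_set|].
  by apply: setDS; rewrite clopen_join; exact: subsetUl.
- apply: le_trans lam2b; apply: le_measure; [exact/mem_set|exact/mem_set|].
  by apply: setDS; rewrite clopen_join; exact: subsetUr.
Qed.

Variable lam : {measure set (pointedSt x0) -> \bar R}.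
Hypotheses (lam_fin : lam setT < +oo) (lam_reg : clopen_inner_regular lam).

Lemma open_approximable (U : set (St A)) : open U -> clopen_approximable lam U.
Proof.
move=> Uopen e e0; have [a aU lamUa] := lam_reg Uopen e0; exists a.
by rewrite /setY (_ : clopen_of a `\` U = set0) ?setU0 // setD_eq0.
Qed.

Lemma approximableC (C : set (St A)) :
  clopen_approximable lam C -> clopen_approximable lam (~` C).
Proof.
by move=> Capp e /Capp[a lamCa]; exists (Order.compl a); rewrite clopen_compl setYCC.
Qed.

Lemma approximableU (C D : set (pointedSt x0)) : measurable C -> measurable D ->
  clopen_approximable lam C -> clopen_approximable lam D ->
  clopen_approximable lam (C `|` D).
Proof.
move=> mC mD Capp Dapp e e0; have e20 : (0 < e / 2)%R by rewrite divr_gt0.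
have [a lamCa] := Capp _ e20; have [b lamDb] := Dapp _ e20.
exists (Order.join a b); rewrite clopen_join.
have mclopen c : measurable (clopen_of c : set (pointedSt x0)).
  exact: St_open_measurable (open_clopen c).
have mYa := measurableY mC (mclopen a); have mYb := measurableY mD (mclopen b).
apply: (@le_trans _ _ (lam (C `+` clopen_of a) + lam (D `+` clopen_of b))).
  apply: le_trans (measureU2 _ mYa mYb); apply: le_measure; last exact: subsetYU.
  - by apply/mem_set/measurableY; apply: measurableU.
  - exact/mem_set/measurableU.
by rewrite [e]splitr EFinD leeD.
Qed.

Lemma approximable_bigsetU (F : nat -> set (pointedSt x0)) n :
  (forall i, measurable (F i)) -> (forall i, clopen_approximable lam (F i)) ->
  clopen_approximable lam (\big[setU/set0]_(i < n) F i).
Proof.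
move=> mF Fapp; elim: n => [|n IHn].
  by rewrite big_ord0; exact: open_approximable open0.
rewrite big_ord_recr; apply: approximableU => //.
exact: bigsetU_measurable.
Qed.

Lemma approximable_bigcup (F : nat -> set (pointedSt x0)) :
  (forall i, measurable (F i)) -> (forall i, clopen_approximable lam (F i)) ->
  clopen_approximable lam (\bigcup_i F i).
Proof.
move=> mF Fapp e e0; have e20 : (0 < e / 2)%R by rewrite divr_gt0.
pose G n := \big[setU/set0]_(i < n) F i.
have mG n : measurable (G n) by exact: bigsetU_measurable.
have mU : measurable (\bigcup_i F i) by exact: bigcupT_measurable.
have tail_cvg := measure_bigcup_tail_cvg0 lam_fin mF.
have e2E : 0 < (e / 2)%:E by rewrite lte_fin.
have [N _ tailN] := tail_cvg _ (open_ereal_lt' e2E).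
have [a lamGa] := approximable_bigsetU N mF Fapp e20; exists a.
have mclopen : measurable (clopen_of a : set (pointedSt x0)).
  exact: St_open_measurable (open_clopen a).
apply: le_trans (measureY_triangle _ mU (mG N) mclopen) _.
have -> : \bigcup_i F i `+` G N = \bigcup_i F i `\` G N.
  by rewrite /setY (_ : G N `\` _ = set0) ?setU0 // setD_eq0; exact: bigsetU_bigcup.
by rewrite [e]splitr EFinD leeD // ltW //; exact: (tailN N (leqnn N)).
Qed.

Lemma borel_approximable (C : set (St A)) :
  St_borel C -> clopen_approximable lam C.
Proof.
suff: @St_borel _ A `<=`
    [set C : set (pointedSt x0) | measurable C /\ clopen_approximable lam C].
  by move=> sub /sub[].
apply: smallest_sub => [|U Uopen].
  2: by split; [exact: St_open_measurable|exact: open_approximable].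
split=> [|D [mD Dapp]|F mFapp].
- by split; [exact: measurable0|exact: open_approximable open0].
- by rewrite setTD; split; [exact: measurableC|exact: approximableC].
- split; first by apply: bigcupT_measurable => i; case: (mFapp i).
  by apply: approximable_bigcup => i; case: (mFapp i).
Qed.

End ClopenApproximation.

Definition inner_regular_at {R : realType} {T : topologicalType}
    (m : set T -> \bar R) (V : set T) :=
  m V = ereal_sup [set m K | K in [set K | compact K /\ K `<=` V]].

Section StoneImage.
Local Open Scope ereal_scope.
Context {R : realType} {dA dB : Order.disp_t} {A : ctbDistrLatticeType dA}
  {B : ctbDistrLatticeType dB} (x0 : St A) (y0 : St B)
  (m : {measure set (pointedSt y0) -> \bar R}).

Lemma compact_inner_approx (V : set (pointedSt y0)) (e : R) :
  measurable V -> m V < +oo -> inner_regular_at m V -> (0 < e)%R ->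
  exists2 K, compact K /\ K `<=` V & m (V `\` K) <= e%:E.
Proof.
move=> mV mVfin mVreg e0; have mVfin' : m V \is a fin_num by rewrite ge0_fin_numE.
have : m V - e%:E < m V by rewrite lteBlDr // lteDl.
rewrite {2}mVreg => /ereal_sup_gt[_ [K [Kc KV] <-]]; rewrite lteBlDr // => mVK.
exists K => //; have mK := St_compact_measurable Kc.
have mKfin : m K \is a fin_num.
  rewrite ge0_fin_numE //; apply: le_lt_trans mVfin.
  by apply: le_measure => //; exact/mem_set.
by rewrite measureD // (setIidr KV) leeBlDr // addeC ltW.
Qed.

Section Image.
Variables (phi : A -> B) (hphi : is_bhom phi).

Let image := pushforward m (stone_map hphi : pointedSt y0 -> pointedSt x0).

Let image0 : image set0 = 0.
Proof. by rewrite /image /pushforward preimage_set0 measure0. Qed.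

Let image_ge0 E : 0 <= image E.
Proof. exact: measure_ge0 m _. Qed.

Let image_sigma_additive : semi_sigma_additive image.
Proof.
(* the library's measure structure on [pushforward] is found from [mf] *)
have mf : measurable_fun setT (stone_map hphi : pointedSt y0 -> pointedSt x0).
  exact: measurable_stone_map.
exact: measure_semi_sigma_additive.
Qed.

Definition stone_image : {measure set (pointedSt x0) -> \bar R} :=
  HB.pack_for (measure _ R) image
    (isMeasure.Build _ _ _ image image0 image_ge0 image_sigma_additive).

Lemma stone_imageE E : stone_image E = m (stone_map hphi @^-1` E).
Proof. by []. Qed.

Lemma stone_image_inner_regular : m setT < +oo ->
  (forall V, open V -> inner_regular_at m V) ->
  clopen_inner_regular stone_image.
Proof.
move=> mfin mreg U Uopen e e0.
have Vopen : open (stone_map hphi @^-1` U : set (pointedSt y0)).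
  by move/continuousP: (continuous_stone_map (hphi := hphi)); apply.
have mV := St_open_measurable Vopen.
have mVfin : m (stone_map hphi @^-1` U) < +oo.
  apply: le_lt_trans mfin; apply: le_measure; last exact: subsetT.
  - exact/mem_set.
  - exact/mem_set/measurableT.
have [K [Kc KV] mVK] := compact_inner_approx mV mVfin (mreg _ Vopen) e0.
have [a fKa aU] : exists2 a, stone_map hphi @` K `<=` clopen_of a & clopen_of a `<=` U.
  apply: (compact_sub_clopen (x0 := x0)) => //; last by move=> _ [q /KV Uq <-].
  exact/continuous_compact/Kc/continuous_subspaceT/continuous_stone_map.
exists a => //; rewrite stone_imageE; apply: le_trans mVK; apply: le_measure.
- apply/mem_set; apply: measurableD => //.
  exact: St_open_measurable (open_clopen (phi a)).
- by apply/mem_set; apply: measurableD => //; exact: St_compact_measurable.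
- by move=> q [Uq Naq]; split=> // Kq; apply/Naq/fKa; exists q.
Qed.

End Image.

Lemma measurable_stone_preimage (phi : A -> B) (hphi : is_bhom phi)
    (C : set (pointedSt x0)) :
  measurable C -> measurable (stone_map hphi @^-1` C : set (pointedSt y0)).
Proof. by move=> mC; rewrite -[_ @^-1` _]setTI; exact: measurable_stone_map. Qed.

Lemma measureY_stone_map_le (phi psi : A -> B) (hphi : is_bhom phi)
    (hpsi : is_bhom psi) (C : set (St A)) (a : A) : St_borel C ->
  m (stone_map hphi @^-1` C `+` stone_map hpsi @^-1` C) <=
  measure_add (stone_image hphi) (stone_image hpsi) (C `+` clopen_of a) +
  m (clopen_of (bsymdiff (phi a) (psi a))).
Proof.
move=> BC; have mC : measurable (C : set (pointedSt x0)) by [].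
have mclopen b : measurable (clopen_of b : set (pointedSt y0)).
  exact: St_open_measurable (open_clopen b).
have mfC := measurable_stone_preimage hphi mC.
have mgC := measurable_stone_preimage hpsi mC.
have mphia := mclopen (phi a); have mpsia := mclopen (psi a).
apply: le_trans (measureY_triangle _ mfC mphia mgC) _.
apply: le_trans (leeD (lexx _) (measureY_triangle _ mphia mpsia mgC)) _.
rewrite measure_addE !stone_imageE clopen_bsymdiff [clopen_of (psi a) `+` _]setYC.
by rewrite addeA addeAC.
Qed.

End StoneImage.

Section RadonMeasure.
Local Open Scope ereal_scope.
Context {R : realType} {d : Order.disp_t} {B : ctbDistrLatticeType d} (y0 : St B)
  (nu : set (St B) -> \bar R) (hnu : radon nu).

(* nu is only meaningful on Borel sets; it is set to 0 elsewhere. *)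
Let nu_borel (E : set (pointedSt y0)) := if pselect (St_borel E) then nu E else 0.

Let nu_borelE E : St_borel E -> nu_borel E = nu E.
Proof. by rewrite /nu_borel; case: pselect. Qed.

Let nu_borel0 : nu_borel set0 = 0.
Proof. by rewrite nu_borelE; [case: hnu.1|exact: (@measurable0 _ (pointedSt y0))]. Qed.

Let nu_borel_ge0 E : 0 <= nu_borel E.
Proof. by rewrite /nu_borel; case: pselect => // BE; case: hnu.1 => _ + _; apply. Qed.

Let nu_borel_sigma_additive : semi_sigma_additive nu_borel.
Proof.
move=> F mF tF mUF; rewrite nu_borelE //.
have -> : (fun n => \sum_(0 <= i < n) nu_borel (F i)) =
          (fun n => \sum_(0 <= i < n) nu (F i)).
  by apply: funext => n; apply: eq_bigr => i _; apply: nu_borelE; exact: mF.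
by case: hnu.1 => _ _; apply.
Qed.

Definition radon_measure : {measure set (pointedSt y0) -> \bar R} :=
  HB.pack_for (measure _ R) nu_borel
    (isMeasure.Build _ _ _ nu_borel nu_borel0 nu_borel_ge0 nu_borel_sigma_additive).

Lemma radon_measureE E : St_borel E -> radon_measure E = nu E.
Proof. exact: nu_borelE. Qed.

Lemma radon_measure_inner_regular V : open V -> inner_regular_at radon_measure V.
Proof.
move=> Vopen; have BV : St_borel V := St_open_measurable Vopen.
rewrite /inner_regular_at radon_measureE // hnu.2 //; congr ereal_sup.
apply: eq_imagel => K [Kc _].
by rewrite radon_measureE //; exact: (St_compact_measurable (x0 := y0)).
Qed.

End RadonMeasure.

Section HomDistances.
Local Open Scope ereal_scope.
Context {R : realType} {dA dB : Order.disp_t} {A : ctbDistrLatticeType dA}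
  {B : ctbDistrLatticeType dB} (mu : B -> R) (hmu : metric_measure mu)
  (nu : set (St B) -> \bar R) (hnu : radon_extension mu nu)
  (phi psi : A -> B) (hphi : is_bhom phi) (hpsi : is_bhom psi).

Lemma radon_extension_setT : nu setT = 1.
Proof. by rewrite -clopen_top hnu.2; case: hmu => ->. Qed.

Lemma St_inhabited : inhabited (St B).
Proof.
apply: contrapT => noSt; have : nu setT = nu set0.
  by congr nu; apply/seteqP; split=> // q _; apply: noSt.
by rewrite radon_extension_setT; case: hnu.1.1 => -> _ _ /eqP; rewrite eqe oner_eq0.
Qed.

Lemma d_hom_le_Bor : d_hom mu phi psi <= d_hom_Bor nu phi psi.
Proof.
apply: ge_ereal_sup => _ [a _ <-]; apply: ereal_sup_ubound.
exists (clopen_of a); first exact: sub_sigma_algebra (open_clopen a).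
by rewrite -hnu.2 clopen_bsymdiff !(stone_preimageE hphi, stone_preimageE hpsi).
Qed.

Lemma d_hom_Bor_le : d_hom_Bor nu phi psi <= d_hom mu phi psi.
Proof.
apply: ge_ereal_sup => _ [C BC <-]; have [y0] := St_inhabited.
pose x0 := stone_map hphi y0; pose m := radon_measure y0 hnu.1.
have m_fin : m setT < +oo.
  rewrite radon_measureE ?radon_extension_setT ?ltry //.
  exact: (@measurableT _ (pointedSt y0)).
pose lam := measure_add (stone_image x0 m hphi) (stone_image x0 m hpsi).
have lam_fin : lam setT < +oo.
  by rewrite /lam measure_addE !stone_imageE !preimage_setT lte_add_pinfty.
have lam_reg : clopen_inner_regular lam.
  by apply: measure_add_inner_regular; apply: stone_image_inner_regular => //;
    exact: radon_measure_inner_regular.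
apply/lee_addgt0Pr => e e0; have [a lamCa] := borel_approximable lam_fin lam_reg BC e0.
rewrite (stone_preimageE hphi) (stone_preimageE hpsi).
rewrite -(@radon_measureE _ _ _ y0 _ hnu.1).
  apply: le_trans (measureY_stone_map_le x0 m hphi hpsi a BC) _.
  rewrite addeC leeD // /m radon_measureE; last exact: St_open_measurable (open_clopen _).
  by rewrite hnu.2; apply: ereal_sup_ubound; exists a.
apply: (@measurableY _ (pointedSt y0)).
all: exact: (measurable_stone_preimage (x0 := x0)).
Qed.

End HomDistances.

Theorem lemma4p6 (R : realType) (dA dB : Order.disp_t)
  (A : ctbDistrLatticeType dA) (B : ctbDistrLatticeType dB)
  (mu : B -> R) (hmu : metric_measure mu)
  (nu : set (St B) -> \bar R) (hnu : radon_extension mu nu)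
  (phi psi : A -> B) (hphi : is_bhom phi) (hpsi : is_bhom psi) :
  d_hom mu phi psi = d_hom_Bor nu phi psi.
Proof.
apply/eqP; rewrite eq_le; apply/andP; split.
- exact: d_hom_le_Bor.
- exact: d_hom_Bor_le.
Qed.
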